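(* For every $\epsilon>0$ there is $\epsilon'>0$ depending only on $\epsilon$ such that for every $f:\{0,1\}^n\to\{-1,1\}$ with $\|f\|_{U_3}\ge\epsilon$, $$\mathbb E_{x,y}\sum_{\alpha,\beta}\hat{f_x}^2(\alpha)\,\hat{f_y}^2(\beta)\,\widehat{f_{x+y}}^2(\alpha+\beta)\ge\epsilon'.$$
   Context: $\{0,1\}^n$ is identified with $\mathbb F_2^n$; $x,y$ independent uniform. $\hat h(\alpha)=\mathbb E_z h(z)(-1)^{\langle\alpha,z\rangle}$; $f_y(x)=f(x)f(x+y)$. $\|f\|_{U_3}=\big[\mathbb E_{x,y_1,y_2,y_3}\prod_{S\subseteq[3]} f(x+\sum_{i\in S}y_i)\big]^{1/8}$. *)

From HB Require Import structures.
From mathcomp Require Import all_boot all_order all_algebra.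
From mathcomp Require Import reals exp.
Set Implicit Arguments. Unset Strict Implicit. Unset Printing Implicit Defensive.
Import Order.TTheory GRing.Theory Num.Theory.
Local Open Scope ring_scope.

(* {0,1}^n identified with F_2^n, represented as row vectors over 'F_2. *)
Notation cube n := 'rV['F_2]_n.

Section Defs.
Variable R : realType.

Definition Ex n (h : cube n -> R) : R :=
  (#|{: cube n}|%:R)^-1 * \sum_(z : cube n) h z.

Definition ip n (a z : cube n) : 'F_2 := \sum_(i < n) a ord0 i * z ord0 i.

Definition chi n (a z : cube n) : R := if ip a z == 0 then 1 else -1.

Definition fourier n (h : cube n -> R) (a : cube n) : R :=
  Ex (fun z => h z * chi a z).

Definition fder n (f : cube n -> R) (y : cube n) : cube n -> R :=
  fun x => f x * f (x + y).

Definition U3norm n (f : cube n -> R) : R :=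
  powR (Ex (fun x => Ex (fun y1 => Ex (fun y2 => Ex (fun y3 =>
    \prod_(S : {set 'I_3})
      f (x + \sum_(i in S) nth 0 [:: y1; y2; y3] i))))))
  (8%:R^-1).

End Defs.

From HB Require Import structures.
From mathcomp Require Import all_boot all_order all_algebra.
From mathcomp Require Import reals exp ring.
Import Order.TTheory GRing.Theory Num.Theory.
Local Open Scope ring_scope.
Set Implicit Arguments. Unset Strict Implicit.

(* For Boolean f every derivative f_h is Boolean, so its Fourier weights
   hat(f_h)(a)^2 sum to 1.  Since hat(g)^2 is the Fourier transform of the
   autocorrelation of g, and the autocorrelations of the derivatives satisfy
   (f_x * f_x)(h) = (f_h * f_h)(x), both sides of the theorem become averages
   over h of Fourier moments of f_h: ||f||_{U_3}^8 = E_h sum_a hat(f_h)(a)^4,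
   and the left-hand side equals E_h sum_a hat(f_h)(a)^6.  Cauchy-Schwarz
   against the unit Fourier weight gives (sum hat^4)^2 <= sum hat^6, and Jensen in h
   then yields the bound with eps' = eps^16. *)

Section CauchySchwarz.
Variables (R : realFieldType) (I : finType).
Implicit Types u v : I -> R.

Lemma sqr_sum_mul_le u v :
  (\sum_i u i * v i) ^+ 2 <= (\sum_i u i ^+ 2) * (\sum_i v i ^+ 2).
Proof.
pose D i j := u i ^+ 2 * v j ^+ 2 - (u i * v i) * (u j * v j).
have sumD : \sum_i \sum_j D i j
    = (\sum_i u i ^+ 2) * (\sum_i v i ^+ 2) - (\sum_i u i * v i) ^+ 2.
  rewrite expr2 !big_distrlr /= -sumrB; apply: eq_bigr => i _.
  by rewrite -sumrB.
have sumD_sym : \sum_i \sum_j (D i j + D j i) = 2 * \sum_i \sum_j D i j.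
  under eq_bigr do rewrite big_split /=.
  by rewrite big_split /= [X in _ + X]exchange_big mulr2n mulrDl mul1r.
have : 0 <= \sum_i \sum_j (D i j + D j i).
  apply: sumr_ge0 => i _; apply: sumr_ge0 => j _.
  have -> : D i j + D j i = (u i * v j - u j * v i) ^+ 2 by rewrite /D; ring.
  exact: sqr_ge0.
by rewrite sumD_sym sumD pmulr_rge0 // subr_ge0.
Qed.

Lemma sqr_sum_exp4_le u : \sum_i u i ^+ 2 = 1 ->
  (\sum_i u i ^+ 4) ^+ 2 <= \sum_i u i ^+ 6.
Proof.
move=> u_unit; have := sqr_sum_mul_le u (fun i => u i ^+ 3).
rewrite u_unit mul1r.
under eq_bigr do rewrite -exprS.
by under [X in _ <= X -> _]eq_bigr do rewrite -exprM.
Qed.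

Lemma sqr_mean_le v :
  ((#|I|%:R)^-1 * \sum_i v i) ^+ 2 <= (#|I|%:R)^-1 * \sum_i v i ^+ 2.
Proof.
have [I_eq0|] := posnP #|I|.
  by rewrite I_eq0 invr0 !mul0r expr0n.
rewrite -(ltr0n R) => I_gt0.
have := sqr_sum_mul_le (fun _ => 1) v.
under eq_bigr do rewrite mul1r.
rewrite (eq_bigr (fun _ => 1) (fun _ _ => expr1n _ _)) sumr_const => CS.
have -> : (#|I|%:R)^-1 * \sum_i v i ^+ 2
    = (#|I|%:R)^-1 ^+ 2 * (#|I|%:R * \sum_i v i ^+ 2) :> R.
  by rewrite expr2 -mulrA (mulrA _ #|I|%:R) mulVf ?gt_eqF // mul1r.
by rewrite exprMn ler_wpM2l // exprn_ge0 // invr_ge0 ltW.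
Qed.
End CauchySchwarz.

Definition setI3 (b0 b1 b2 : bool) : {set 'I_3} :=
  [set i : 'I_3 | nth false [:: b0; b1; b2] i].

Lemma big_setI3 (T : Type) (idx : T) (op : Monoid.com_law idx) (F : {set 'I_3} -> T) :
  \big[op/idx]_(S : {set 'I_3}) F S
  = \big[op/idx]_(b0 : bool) \big[op/idx]_(b1 : bool) \big[op/idx]_(b2 : bool)
      F (setI3 b0 b1 b2).
Proof.
rewrite pair_big pair_big /=.
rewrite (reindex (fun b : bool * bool * bool => setI3 b.1.1 b.1.2 b.2)) //=.
exists (fun S : {set 'I_3} => ((@Ordinal 3 0 isT \in S, @Ordinal 3 1 isT \in S),
                  @Ordinal 3 2 isT \in S)).
  by move=> [[b0 b1] b2] _; rewrite /setI3 !inE.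
move=> S _; apply/setP => i; rewrite /setI3 inE.
by case: i => [[|[|[|k]]] Hk] //=; congr (_ \in S); apply: val_inj.
Qed.

Lemma sum_setI3 (V : nmodType) b0 b1 b2 (y0 y1 y2 : V) :
  \sum_(i in setI3 b0 b1 b2) nth 0 [:: y0; y1; y2] i
  = (if b0 then y0 else 0) + (if b1 then y1 else 0) + (if b2 then y2 else 0).
Proof.
rewrite big_mkcond /= !big_ord_recl big_ord0 /setI3 !inE /=.
by case: b0; case: b1; case: b2; rewrite /= ?addr0 ?add0r ?addrA.
Qed.

Lemma F2_cases (x : 'F_2) : x = 0 \/ x = 1.
Proof. by case: x => [[|[|k]] Hk]; [left|right|]; try apply/val_inj. Qed.

Section BooleanCube.
Variable n : nat.
Implicit Types a b x y z w : cube n.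

Lemma cube_addxx x : x + x = 0.
Proof. by apply/matrixP => i j; rewrite !mxE addrr_pchar2 // pchar_Fp. Qed.

Lemma cube_oppr x : - x = x.
Proof. by apply/eqP; rewrite eq_sym -addr_eq0 cube_addxx. Qed.

Lemma ipDr a z w : ip a (z + w) = ip a z + ip a w.
Proof. by rewrite /ip -big_split; apply: eq_bigr => i _; rewrite mxE mulrDr. Qed.

Lemma ipC a z : ip a z = ip z a.
Proof. by apply: eq_bigr => i _; rewrite mulrC. Qed.

Variable R : realType.

Lemma chiDr a z w : chi R a (z + w) = chi R a z * chi R a w.
Proof.
rewrite /chi ipDr.
by case: (F2_cases (ip a z)) => ->; case: (F2_cases (ip a w)) => ->;
  rewrite ?mulr1 ?mul1r ?mulrNN ?mulr1 //.
Qed.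

Lemma chiC a z : chi R a z = chi R z a.
Proof. by rewrite /chi ipC. Qed.

Lemma chiDl a b z : chi R (a + b) z = chi R a z * chi R b z.
Proof. by rewrite chiC chiDr !(chiC z). Qed.

Lemma chi_mul_self a z : chi R a z * chi R a z = 1.
Proof. by rewrite /chi; case: ifP; rewrite ?mulrNN mulr1. Qed.

Local Notation N := (#|{: cube n}|%:R : R).

Lemma N_neq0 : N != 0.
Proof. by rewrite pnatr_eq0 -lt0n; apply/card_gt0P; exists 0. Qed.

(* For [z != 0], translation by a unit vector [e] with [chi e z = -1] negates the sum. *)
Lemma sum_chi z : \sum_a chi R a z = if z == 0 then N else 0.
Proof.
case: eqP => [->|/eqP z_neq0].
  rewrite -sumr_const; apply: eq_bigr => a _.
  by rewrite /chi /ip big1 // => i _; rewrite mxE mulr0.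
have [i zi_neq0] : exists i, z ord0 i != 0.
  apply/existsP; apply: contraNT z_neq0 => /existsPn z0.
  by apply/eqP/matrixP => r j; rewrite !ord1 mxE; apply/eqP/negbNE/z0.
have zi1 : z ord0 i = 1 by case: (F2_cases (z ord0 i)) zi_neq0 => ->.
pose e : cube n := delta_mx ord0 i.
have chi_e : chi R e z = -1.
  rewrite /chi /ip (bigD1 i) //= big1 => [|j ji].
    by rewrite !mxE !eqxx zi1 mulr1 addr0.
  by rewrite !mxE eqxx /= (negbTE ji) mul0r.
have sum_opp : \sum_a chi R a z = - \sum_a chi R a z.
  rewrite {1}(reindex_inj (addIr e)) /= -mulN1r big_distrr /=.
  by apply: eq_bigr => a _; rewrite chiDl chi_e mulrC.
by move/eqP: sum_opp; rewrite -subr_eq0 opprK -mulr2n mulrn_eq0 => /eqP.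
Qed.
End BooleanCube.

Section Expectation.
Variables (R : realType) (n : nat).
Implicit Types (h : cube n -> R) (w : cube n).

Lemma eq_Ex h1 h2 : h1 =1 h2 -> Ex h1 = Ex h2.
Proof. by move=> eq_h; rewrite /Ex (eq_bigr _ (fun z _ => eq_h z)). Qed.

Lemma Ex_mulr h c : Ex h * c = Ex (fun z => h z * c).
Proof. by rewrite /Ex -mulrA big_distrl. Qed.

Lemma Ex_mull c h : c * Ex h = Ex (fun z => c * h z).
Proof. by rewrite mulrC Ex_mulr; apply: eq_Ex => z; rewrite mulrC. Qed.

Lemma sum_Ex (I : finType) (F : I -> cube n -> R) :
  \sum_i Ex (F i) = Ex (fun z => \sum_i F i z).
Proof. by rewrite /Ex -big_distrr exchange_big. Qed.

Lemma Ex_swap (G : cube n -> cube n -> R) :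
  Ex (fun x => Ex (G x)) = Ex (fun y => Ex (fun x => G x y)).
Proof. by rewrite {1}/Ex sum_Ex Ex_mull. Qed.

Lemma Ex_translate h w : Ex (fun z => h (z + w)) = Ex h.
Proof. by rewrite /Ex [in RHS](reindex_inj (addIr w)). Qed.

Lemma Ex_const (c : R) : Ex (fun _ : cube n => c) = c.
Proof. by rewrite /Ex sumr_const -[c *+ _]mulr_natr mulrCA mulVf ?mulr1 // N_neq0. Qed.

Lemma ler_Ex h1 h2 : (forall z, h1 z <= h2 z) -> Ex h1 <= Ex h2.
Proof. by move=> le_h; rewrite ler_wpM2l ?invr_ge0 // ler_sum. Qed.

Lemma Ex_ge0 h : (forall z, 0 <= h z) -> 0 <= Ex h.
Proof. by move=> h_ge0; rewrite -(Ex_const 0) ler_Ex. Qed.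

Lemma sqr_Ex_le h : Ex h ^+ 2 <= Ex (fun z => h z ^+ 2).
Proof. exact: sqr_mean_le. Qed.
End Expectation.

Section Fourier.
Variables (R : realType) (n : nat).
Implicit Types (P Q S g : cube n -> R) (a b l w : cube n).

Lemma fourier_inversion P l : \sum_a fourier P a * chi R a l = P l.
Proof.
under eq_bigr do rewrite /fourier Ex_mulr.
rewrite sum_Ex.
transitivity (Ex (fun z => P z * \sum_a chi R a (z + l))).
  apply: eq_Ex => z; rewrite big_distrr /=; apply: eq_bigr => a _.
  by rewrite chiDr mulrA.
under eq_Ex do rewrite sum_chi addr_eq0 cube_oppr.
rewrite /Ex (bigD1 l) //= eqxx big1 ?addr0 => [|z /negbTE ->]; last by rewrite mulr0.
by rewrite mulrCA mulVf ?mulr1 // N_neq0.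
Qed.

Lemma parseval P Q : \sum_a fourier P a * fourier Q a = Ex (fun x => P x * Q x).
Proof.
under eq_bigr do rewrite /fourier Ex_mulr.
rewrite sum_Ex; apply: eq_Ex => x.
transitivity (P x * \sum_a fourier Q a * chi R a x); last by rewrite fourier_inversion.
by rewrite big_distrr; apply: eq_bigr => a _; rewrite mulrAC -mulrA.
Qed.

Lemma fourier_translate P w a :
  fourier (fun z => P (z + w)) a = fourier P a * chi R a w.
Proof.
rewrite /fourier Ex_mulr -[RHS](Ex_translate _ w); apply: eq_Ex => z.
by rewrite chiDr -!mulrA chi_mul_self mulr1.
Qed.

Definition autocorr g (h : cube n) : R := Ex (fun z => g z * g (z + h)).

Lemma fourier_sqr g a : fourier g a ^+ 2 = fourier (autocorr g) a.
Proof.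
rewrite expr2 {1}/fourier Ex_mulr [RHS]/fourier.
under [RHS]eq_Ex do rewrite /autocorr Ex_mulr.
rewrite Ex_swap; apply: eq_Ex => z.
rewrite -mulrA (mulrC (chi R a z)) -fourier_translate Ex_mull.
by apply: eq_Ex => h; rewrite mulrA (addrC h z).
Qed.

Lemma autocorr_sqr g x : autocorr g x ^+ 2
  = Ex (fun z => Ex (fun y => g z * g (z + x) * (g (z + y) * g (z + y + x)))).
Proof.
rewrite expr2 {1}/autocorr Ex_mulr; apply: eq_Ex => z.
rewrite /autocorr Ex_mull -(Ex_translate _ z); apply: eq_Ex => y.
by rewrite (addrC y z).
Qed.

Lemma sum_fourier_conv P Q S :
  \sum_a \sum_b fourier P a * fourier Q b * fourier S (a + b)
  = Ex (fun l => P l * Q l * S l).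
Proof.
transitivity (Ex (fun l => S l * ((\sum_a fourier P a * chi R a l)
                                  * (\sum_b fourier Q b * chi R b l)))).
  under eq_bigr do under eq_bigr do rewrite [fourier S _]/fourier Ex_mull.
  under eq_bigr do rewrite sum_Ex.
  rewrite sum_Ex; apply: eq_Ex => l.
  rewrite big_distrlr big_distrr /=; apply: eq_bigr => a _.
  rewrite big_distrr /=; apply: eq_bigr => b _.
  by rewrite chiDl; ring.
by apply: eq_Ex => l; rewrite !fourier_inversion mulrC.
Qed.

Lemma sum_fourier_exp4 g :
  \sum_a fourier g a ^+ 4 = Ex (fun x => autocorr g x ^+ 2).
Proof.
under eq_bigr do rewrite -[4%N]/(2 * 2)%N exprM fourier_sqr expr2.
by rewrite parseval; apply: eq_Ex => x; rewrite expr2.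
Qed.

Lemma sum_fourier_exp6 g : \sum_a fourier g a ^+ 6
  = Ex (fun x => autocorr g x * Ex (fun y => autocorr g y * autocorr g (y + x))).
Proof.
under eq_bigr do rewrite -[6%N]/(2 * 3)%N exprM fourier_sqr exprS fourier_sqr.
exact: parseval.
Qed.

Lemma sum_fourier_sqr_sign g : (forall z, g z ^+ 2 = 1) ->
  \sum_a fourier g a ^+ 2 = 1.
Proof.
move=> g_sign; under eq_bigr do rewrite expr2.
by rewrite parseval; under eq_Ex do rewrite -expr2 g_sign; exact: Ex_const.
Qed.
End Fourier.

Section Derivatives.
Variables (R : realType) (n : nat) (f : cube n -> R).
Implicit Types (a h x y l : cube n).

Lemma autocorr_fderC x l : autocorr (fder f x) l = autocorr (fder f l) x.
Proof.
apply: eq_Ex => z; rewrite /fder.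
have -> : z + x + l = z + l + x by rewrite -!addrA (addrC x).
by ring.
Qed.

Lemma U3normE :
  U3norm f = powR (Ex (fun h => \sum_a fourier (fder f h) a ^+ 4)) 8%:R^-1.
Proof.
rewrite /U3norm; congr powR.
under [RHS]eq_Ex do rewrite sum_fourier_exp4 (eq_Ex (autocorr_sqr _)).
under [RHS]eq_Ex do rewrite Ex_swap.
rewrite [RHS]Ex_swap; apply: eq_Ex => x; apply: eq_Ex => y1.
apply: eq_Ex => y2; apply: eq_Ex => y3.
rewrite big_setI3 !big_bool /= !sum_setI3 /= ?addr0 ?add0r !addrA /fder.
(* The autocorrelation variables (z, h, x, y) are (x, y1, y2, y3) here. *)
have -> : x + y3 + y2 + y1 = x + y1 + y2 + y3.
  by rewrite -!addrA [y3 + _]addrC (addrC y2) -addrA.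
have -> : x + y2 + y1 = x + y1 + y2 by rewrite -!addrA (addrC y2).
have -> : x + y3 + y1 = x + y1 + y3 by rewrite -!addrA (addrC y3).
have -> : x + y3 + y2 = x + y2 + y3 by rewrite -!addrA (addrC y3).
by ring.
Qed.

Lemma Ex_fourier_fder_conv :
  Ex (fun x => Ex (fun y =>
    \sum_a \sum_b fourier (fder f x) a ^+ 2 * fourier (fder f y) b ^+ 2
                   * fourier (fder f (x + y)) (a + b) ^+ 2))
  = Ex (fun l => \sum_a fourier (fder f l) a ^+ 6).
Proof.
under eq_Ex => x do under eq_Ex => y do
  (under eq_bigr do under eq_bigr do rewrite !fourier_sqr;
   rewrite sum_fourier_conv).
under eq_Ex => x do under eq_Ex => y do under eq_Ex => l do
  rewrite (autocorr_fderC x l) (autocorr_fderC y l) (autocorr_fderC (x + y) l).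
under eq_Ex do rewrite Ex_swap.
rewrite Ex_swap; apply: eq_Ex => l; rewrite sum_fourier_exp6.
apply: eq_Ex => x; rewrite Ex_mull; apply: eq_Ex => y.
by rewrite (addrC y) mulrA.
Qed.

Lemma fder_sign h : (forall x, f x = 1 \/ f x = -1) ->
  forall z, fder f h z ^+ 2 = 1.
Proof.
move=> f_sign z; have f_sqr y : f y * f y = 1.
  by case: (f_sign y) => ->; rewrite ?mulrNN mulr1.
by rewrite /fder expr2 mulrACA !f_sqr mulr1.
Qed.
End Derivatives.

Theorem corollary6p6 (R : realType) (eps : R) (heps : 0 < eps) :
  exists eps' : R, 0 < eps' /\
    forall (n : nat) (f : cube n -> R),
      (forall x, f x = 1 \/ f x = -1) ->
      eps <= U3norm f ->
      eps' <= Ex (fun x => Ex (fun y =>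
        \sum_(a : cube n) \sum_(b : cube n)
          (fourier (fder f x) a) ^+ 2 * (fourier (fder f y) b) ^+ 2
          * (fourier (fder f (x + y)) (a + b)) ^+ 2)).
Proof.
exists (eps ^+ 16); split; first exact: exprn_gt0.
move=> n f f_sign; rewrite U3normE Ex_fourier_fder_conv.
set Y := fun h => \sum_a fourier (fder f h) a ^+ 4.
have Y_ge0 h : 0 <= Y h by apply: sumr_ge0 => a _; exact: exprn_even_ge0.
have EY_ge0 : 0 <= Ex Y by exact: Ex_ge0.
move=> eps_le; have eps8_le : eps ^+ 8 <= Ex Y.
  rewrite -[Ex Y](powRr1 EY_ge0) -(mulVf (_ : 8%:R != 0 :> R)) ?pnatr_eq0 //.
  by rewrite powRrM powR_mulrn ?powR_ge0 // lerXn2r // nnegrE ?powR_ge0 // ltW.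
have moment_le h : Y h ^+ 2 <= \sum_a fourier (fder f h) a ^+ 6.
  exact/sqr_sum_exp4_le/sum_fourier_sqr_sign/fder_sign.
apply: le_trans (le_trans (sqr_Ex_le Y) (ler_Ex moment_le)).
by rewrite -[16%N]/(8 * 2)%N exprM lerXn2r // nnegrE exprn_ge0 // ltW.
Qed.
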